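(* Let $(S,\mathit{Act},P,\mu)$ be an MDP, $\pi$ a stationary policy, $I\subseteq S$ a measurable set that is absorbing under $\pi$ with $\mu(I)=1$, and $A,B\subseteq S$ measurable. Let $0<\gamma<1$ and suppose there is a constant $\bar H<\infty$ with $\mathbb{E}_\pi[\mathrm{step}^{(A,B)}\mid S_0=s]\le\bar H$ for all $s\in I$. Let the reward be $r(s,a,s')=r_B\mathbf 1_{\{s\in B\}}-r_{A\setminus B}\mathbf 1_{\{s\in A\setminus B\}}$ with $r_B,r_{A\setminus B}>0$ and $\frac{r_B}{r_{A\setminus B}}\ge\frac{1}{1-\gamma}\left(\frac{1}{\gamma^{\bar H+1}}-1\right)$, and the state-dependent discount $\Gamma(s)=\gamma$ if $s\in A\cup B$, $\Gamma(s)=1$ otherwise. Then for all $s\in I$, $$V^\pi(s)\ge -\,r_{A\setminus B}\,\frac{1-\gamma^{\bar H}}{1-\gamma}.$$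
   Context: State and action spaces are finite/countable or Borel subsets of Euclidean space; $P$ is a stochastic kernel on $S$ given $S\times\mathit{Act}$ and $\mu$ an initial distribution. A stationary policy $\pi$ is a stochastic kernel on $\mathit{Act}$ given $S$; $\Pr_\pi(\cdot\mid S_0=s)$, $\mathbb{E}_\pi[\cdot\mid S_0=s]$ refer to the process with $S_0=s$, $A_t\sim\pi(\cdot\mid S_t)$, $S_{t+1}\sim P(\cdot\mid S_t,A_t)$. A measurable set $X$ is absorbing under $\pi$ if $\Pr_\pi(S_1\in X\mid S_0=s)=1$ for all $s\in X$. For a run $\rho=(s_0,s_1,\dots)$: $\mathrm{step}^{(A,B)}(\rho):=|\{i:0\le i<\min\{j\ge0:s_j\in B\},\ s_i\in A\}|$ (with $\min\emptyset=\infty$), and $N^U_t(\rho):=|\{i:0\le i<t,\ s_i\in U\}|$. The value function with the state-dependent discount $\Gamma$ is $V^\pi(s)=\mathbb{E}_\pi\big[\sum_{t\ge0}\gamma^{N_t^{A\cup B}}r(S_t,A_t,S_{t+1})\mid S_0=s\big]$. *)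

From HB Require Import structures.
From mathcomp Require Import all_boot all_order all_algebra.
From mathcomp Require Import all_classical all_reals all_analysis.
Set Implicit Arguments. Unset Strict Implicit. Unset Printing Implicit Defensive.
Import Order.TTheory GRing.Theory Num.Theory.
Local Open Scope classical_set_scope.
Local Open Scope ring_scope.

Section MDP.
Context {R : realType} {dS dA : measure_display}
  {S : measurableType dS} {Act : measurableType dA}.

(* Iterated-kernel value of the finite-dimensional distribution
   Pr(S_j ∈ C_j, A_j ∈ D_j for j = k .. k+m | S_k = x) under policy pi and
   transition kernel P. *)
Fixpoint fdd (P : R.-pker (S * Act) ~> S) (pi : R.-pker S ~> Act)
  (C : nat -> set S) (D : nat -> set Act) (m k : nat) (x : S) : \bar R :=
  match m with
  | 0 => ((\1_(C k) x)%:E * pi x (D k))%E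
  | m'.+1 => ((\1_(C k) x)%:E *
      \int[pi x]_(a in D k) \int[P (x, a)]_y fdd P pi C D m' k.+1 y)%E
  end.

(* (Pr s, St, At) realizes the MDP under the stationary policy pi started in
   S_0 = s: S_0 = s, A_t ~ pi(.|S_t), S_{t+1} ~ P(.|S_t,A_t); stated via all
   finite-dimensional distributions. *)
Definition is_MDP_process {dO} {O : measurableType dO}
  (P : R.-pker (S * Act) ~> S) (pi : R.-pker S ~> Act)
  (Pr : S -> probability O R) (St : nat -> O -> S) (At : nat -> O -> Act) :=
  (forall t, measurable_fun setT (St t)) /\
  (forall t, measurable_fun setT (At t)) /\
  (forall s (C : nat -> set S) (D : nat -> set Act) n,
     (forall j, measurable (C j)) -> (forall j, measurable (D j)) ->
     Pr s (\bigcap_(j in [set j | (j <= n)%N])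
             (St j @^-1` C j `&` At j @^-1` D j)) = fdd P pi C D n 0 s).

(* step^{(A,B)}(rho) = |{ i : i < min{j : s_j in B}, s_i in A }| (possibly +oo) *)
Definition stepAB (A B : set S) (rho : nat -> S) : \bar R :=
  (\sum_(i <oo)
     ((\1_[set i : nat | (forall j, (j <= i)%N -> ~ B (rho j)) /\ A (rho i)] i)
       : R)%:E)%E.

Definition Ncount (U : set S) (rho : nat -> S) (t : nat) : nat :=
  \sum_(i < t) (rho i \in U : nat).

Definition rew (A B : set S) (rB rAB : R) (s : S) (a : Act) (s' : S) : R :=
  rB * \1_B s - rAB * \1_(A `\` B) s.

Definition disc_return (A B : set S) (rB rAB gamma : R)
  (rho : nat -> S) (alpha : nat -> Act) : R :=
  limn (fun n => \sum_(t < n)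
     (gamma ^+ Ncount (A `|` B) rho t * rew A B rB rAB (rho t) (alpha t) (rho t.+1))).

End MDP.

From HB Require Import structures.
From mathcomp Require Import all_boot all_order all_algebra.
From mathcomp Require Import all_classical all_reals all_analysis.
From mathcomp Require Import measurable_realfun lra ring.
Set Implicit Arguments. Unset Strict Implicit. Unset Printing Implicit Defensive.
Import Order.TTheory GRing.Theory Num.Theory.
Local Open Scope classical_set_scope.
Local Open Scope ring_scope.

(* Let V_n(u, phi)(x) = E_x [sum_{t<n} (prod_{j<t} u(S_j)) phi(S_t)].  These
   finite-horizon values satisfy the Bellman recursion
   V_{n+1}(u, phi) = phi + u * Q V_n(u, phi), Q the one-step kernel of the chain.
   With c = r_{A\B} / (1 - gamma), the discount u = gamma on A u B (1 elsewhere)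
   and the step count V^s_n = V_n(1_{~B}, 1_{A\B}) <= H, induction on n gives,
   on the absorbing set I,
     V_n(u, cost) + c gamma^(V^s_n) <= V_n(u, reward) + c:
   one step of the recursion is handled by Jensen's inequality for
   r |-> gamma^r, by Q(x, I) = 1, and by the ratio condition in the form
   gamma c (1 - gamma^H) <= r_B.  Hence V_n(u, reward) - V_n(u, cost) >=
   c gamma^H - c, and monotone convergence carries this to the expected return.
   The Markov property behind the recursion is given by the finite-dimensional
   distributions for indicators only; it extends by multilinearity to
   nonnegative combinations of two indicators, which covers every per-step
   function used. *)

Lemma indic_mem {R : pzRingType} {T : Type} (A : set T) (x : T) :
  A x -> \1_A x = 1 :> R.
Proof. by move=> Ax; rewrite indicE mem_set. Qed.

Lemma indic_nmem {R : pzRingType} {T : Type} (A : set T) (x : T) :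
  ~ A x -> \1_A x = 0 :> R.
Proof. by move=> nAx; rewrite indicE memNset. Qed.

Lemma bounded_fineK (R : realType) (e : \bar R) (M : R) :
  (0 <= e)%E -> (e <= M%:E)%E -> e = (fine e)%:E.
Proof. by move=> e0 eM; rewrite fineK // ge0_fin_numE // (le_lt_trans eM (ltry _)). Qed.

Section NonnegCombination.
Context {d : measure_display} {T : measurableType d} {R : realType}.

Definition nncomb2 (phi : T -> R) := exists (c0 c1 : R) (E0 E1 : set T),
  [/\ 0 <= c0, 0 <= c1, measurable E0, measurable E1 &
      forall y, phi y = c0 * \1_E0 y + c1 * \1_E1 y].

Lemma nncomb2_ge0 phi : nncomb2 phi -> forall y, 0 <= phi y.
Proof.
by move=> [c0 [c1 [E0 [E1 [c00 c10 _ _ phiE]]]]] y; rewrite phiE addr_ge0 ?mulr_ge0.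
Qed.

Lemma measurable_nncomb2 phi : nncomb2 phi -> measurable_fun [set: T] phi.
Proof.
move=> [c0 [c1 [E0 [E1 [_ _ mE0 mE1 phiE]]]]].
rewrite (funext phiE); apply: measurable_funD;
  by apply: measurable_funM => //; exact: measurable_indic.
Qed.

Lemma nncomb2_ub phi : nncomb2 phi -> exists M, forall y, phi y <= M.
Proof.
move=> [c0 [c1 [E0 [E1 [c00 c10 _ _ phiE]]]]]; exists (c0 + c1) => y.
by rewrite phiE lerD // ler_piMr.
Qed.

Lemma nncomb2_scale_indic (c : R) (E : set T) :
  0 <= c -> measurable E -> nncomb2 (fun y => c * \1_E y).
Proof.
by move=> c0 mE; exists c, 0, E, set0; split => // y; rewrite mul0r addr0.
Qed.

Lemma nncomb2_indic (E : set T) : measurable E -> nncomb2 \1_E.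
Proof.
by move=> mE; exists 1, 0, E, set0; split => // y; rewrite mul1r mul0r addr0.
Qed.

End NonnegCombination.

Section MarkovChain.
Context {R : realType} {dS dA dO : measure_display}
  {S : measurableType dS} {Act : measurableType dA} {O : measurableType dO}
  (P : R.-pker (S * Act) ~> S) (pi : R.-pker S ~> Act)
  (Pr : S -> probability O R) (St : nat -> O -> S) (At : nat -> O -> Act).

Local Notation Q := (mkcomp pi P).

(** * Kernel chains *)

Lemma mkcomp_setT x : Q x setT = 1%E.
Proof.
rewrite /= /mkcomp /kcomp (eq_integral (fun _ => 1%E)) => [|y _].
  by rewrite integral_cst // mul1e prob_kernel.
by rewrite prob_kernel.
Qed.

Lemma measurable_mkcomp_integral (h : S -> \bar R) :
  (forall y, 0 <= h y)%E -> measurable_fun [set: S] h ->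
  measurable_fun [set: S] (fun x => \int[Q x]_y h y)%E.
Proof.
move=> h0 mh; apply: measurable_fun_integral_kernel => // U mU.
exact: measurable_fun_mkcomp_sfinite.
Qed.

Fixpoint kchain (f : nat -> S -> R) (m k : nat) (x : S) : \bar R :=
  match m with
  | 0 => (f k x)%:E
  | m'.+1 => ((f k x)%:E * \int[Q x]_y kchain f m' k.+1 y)%E
  end.

Lemma kchain_shift f m k x : kchain f m k.+1 x = kchain (fun j => f j.+1) m k x.
Proof.
elim: m k x => [|m IH] k x //=.
by congr (_ * _)%E; apply: eq_integral => y _; rewrite IH.
Qed.

Lemma eq_kchain f f' m k x : (forall j, (k <= j <= k + m)%N -> f j = f' j) ->
  kchain f m k x = kchain f' m k x.
Proof.
elim: m k x => [|m IH] k x ff' /=; first by rewrite ff' // addn0 leqnn.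
rewrite ff' ?leqnn ?leq_addr //; congr (_ * _)%E; apply: eq_integral => y _.
by apply: IH => j /andP[kj jm]; rewrite ff' // (ltnW kj) addnS -addSn.
Qed.

Section NonnegChain.
Variable f : nat -> S -> R.
Hypothesis f_ge0 : forall j y, 0 <= f j y.
Hypothesis mf : forall j, measurable_fun [set: S] (f j).

Lemma kchain_ge0 m k x : (0 <= kchain f m k x)%E.
Proof.
elim: m k x => [|m IH] k x /=; first by rewrite lee_fin.
by rewrite mule_ge0 ?lee_fin // integral_ge0.
Qed.

Lemma measurable_kchain m k : measurable_fun [set: S] (kchain f m k).
Proof.
elim: m k => [|m IH] k /=; first exact/measurable_EFinP.
apply: emeasurable_funM; first exact/measurable_EFinP.
exact: measurable_mkcomp_integral (fun y => kchain_ge0 m k.+1 y) (IH k.+1).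
Qed.

End NonnegChain.

Lemma fdd_kchain (C : nat -> set S) m k x : (forall j, measurable (C j)) ->
  fdd P pi C (fun _ => setT) m k x = kchain (fun j => \1_(C j)) m k x.
Proof.
move=> mC; elim: m k x => [|m IH] k x /=; first by rewrite prob_kernel mule1.
congr (_ * _)%E; rewrite integral_kcomp.
- by apply: eq_integral => a _; apply: eq_integral => y _; rewrite IH.
- by move=> y; exact: kchain_ge0.
- by apply: measurable_kchain => // j; exact: measurable_indic.
Qed.

Hypothesis mSt : forall t, measurable_fun [set: O] (St t).

Let Pr_setT x : ((Pr x : {measure set O -> \bar R}) [set: O] = 1)%E.
Proof. exact: probability_setT. Qed.

(** * Expectations of products along the process *)

Definition expect_prod (f : nat -> S -> R) m x :=
  (\int[Pr x]_w (\prod_(j < m.+1) f j (St j w))%:E)%E.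

Lemma measurable_prod_St (f : nat -> S -> R) m :
  (forall j, measurable_fun [set: S] (f j)) ->
  measurable_fun [set: O] (fun w => \prod_(j < m.+1) f j (St j w)).
Proof. by move=> mf; apply: measurable_prod => j _; exact: measurableT_comp. Qed.

Lemma eq_expect_prod f f' m x : (forall j, (j <= m)%N -> f j = f' j) ->
  expect_prod f m x = expect_prod f' m x.
Proof.
move=> ff'; apply: eq_integral => w _; congr (_%:E); apply: eq_bigr => j _.
by rewrite ff' // -ltnS.
Qed.

Section Linearity.
Variables (f : nat -> S -> R) (g0 g1 : S -> R) (c0 c1 : R) (p : nat).
Hypotheses (c0_ge0 : 0 <= c0) (c1_ge0 : 0 <= c1).
Hypotheses (f_ge0 : forall j y, 0 <= f j y)
  (g0_ge0 : forall y, 0 <= g0 y) (g1_ge0 : forall y, 0 <= g1 y).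
Hypotheses (mf : forall j, measurable_fun [set: S] (f j))
  (mg0 : measurable_fun [set: S] g0) (mg1 : measurable_fun [set: S] g1).
Hypothesis fpE : forall y, f p y = c0 * g0 y + c1 * g1 y.

Let f0 j := if j == p then g0 else f j.
Let f1 j := if j == p then g1 else f j.

Let f0_ge0 j y : 0 <= f0 j y. Proof. by rewrite /f0 /=; case: ifP. Qed.
Let f1_ge0 j y : 0 <= f1 j y. Proof. by rewrite /f1 /=; case: ifP. Qed.
Let mf0 j : measurable_fun [set: S] (f0 j). Proof. by rewrite /f0 /=; case: ifP. Qed.
Let mf1 j : measurable_fun [set: S] (f1 j). Proof. by rewrite /f1 /=; case: ifP. Qed.

Lemma kchain_lin m k x : (k <= p <= k + m)%N ->
  kchain f m k x = (c0%:E * kchain f0 m k x + c1%:E * kchain f1 m k x)%E.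
Proof.
elim: m k x => [|m IH] k x.
  by rewrite addn0 -eqn_leq => /eqP -> /=; rewrite /f0 /f1 !eqxx fpE EFinD !EFinM.
move=> /andP[kp pkm]; have [<-|pk] := eqVneq p k.
  rewrite /=; have -> : kchain f0 m p.+1 = kchain f m p.+1.
    by apply/funext => y; apply: eq_kchain => j /andP[pj _]; rewrite /f0 gtn_eqF.
  have -> : kchain f1 m p.+1 = kchain f m p.+1.
    by apply/funext => y; apply: eq_kchain => j /andP[pj _]; rewrite /f1 gtn_eqF.
  rewrite /f0 /f1 !eqxx fpE EFinD.
  by rewrite ge0_muleDl ?lee_fin ?mulr_ge0 // !EFinM !muleA.
have kp' : (k.+1 <= p <= k.+1 + m)%N.
  by rewrite addSn -addnS pkm andbT ltn_neqAle eq_sym pk kp.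
rewrite /= /f0 /f1 eq_sym (negbTE pk) -/f0 -/f1.
under eq_integral => y _ do rewrite (IH k.+1 y kp').
have kc0 g y : (forall j y, 0 <= g j y) -> (0 <= kchain g m k.+1 y)%E.
  by move=> g_ge0; exact: kchain_ge0.
rewrite ge0_integralD //; last 4 first.
- by move=> y _; rewrite mule_ge0 ?lee_fin // kc0.
- by apply: emeasurable_funM => //; exact: measurable_kchain.
- by move=> y _; rewrite mule_ge0 ?lee_fin // kc0.
- by apply: emeasurable_funM => //; exact: measurable_kchain.
rewrite !ge0_integralZl_EFin //; last 4 first.
- by move=> y _; exact: kc0.
- exact: measurable_kchain.
- by move=> y _; exact: kc0.
- exact: measurable_kchain.
rewrite ge0_muleDr ?mule_ge0 ?lee_fin ?integral_ge0 //.
- by congr (_ + _)%E; exact: muleCA.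
- by move=> y _; exact: kc0.
- by move=> y _; exact: kc0.
Qed.

Lemma expect_prod_lin m x : (p <= m)%N ->
  expect_prod f m x = (c0%:E * expect_prod f0 m x + c1%:E * expect_prod f1 m x)%E.
Proof.
move=> pm; have pm' : (p < m.+1)%N by [].
have prod_upd (g : S -> R) w :
    \prod_(j < m.+1) (if j == p :> nat then g else f j) (St j w) =
    g (St p w) * \prod_(j < m.+1 | j != Ordinal pm') f j (St j w).
  rewrite (bigD1 (Ordinal pm')) //= eqxx; congr (_ * _); apply: eq_bigr => j jp.
  by rewrite ifN //; apply: contra jp => /eqP jp; apply/eqP/val_inj.
have meas_prod (g : nat -> S -> R) : (forall j, measurable_fun [set: S] (g j)) ->
    measurable_fun [set: O] (fun w => (\prod_(j < m.+1) g j (St j w))%:E).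
  by move=> mg; apply/measurable_EFinP; exact: measurable_prod_St.
rewrite /expect_prod (eq_integral (fun w =>
    c0%:E * (\prod_(j < m.+1) f0 j (St j w))%:E +
    c1%:E * (\prod_(j < m.+1) f1 j (St j w))%:E)%E) => [|w _]; last first.
  have -> : \prod_(j < m.+1) f j (St j w) =
            \prod_(j < m.+1) (if j == p :> nat then f p else f j) (St j w).
    by apply: eq_bigr => j _ /=; case: eqP => // ->.
  by rewrite /f0 /f1 !prod_upd fpE -!EFinM -EFinD mulrDl !mulrA.
rewrite ge0_integralD //; last 4 first.
- by move=> w _; rewrite mule_ge0 ?lee_fin // prodr_ge0 // => j _; exact: f0_ge0.
- by apply: emeasurable_funM => //; exact: meas_prod.
- by move=> w _; rewrite mule_ge0 ?lee_fin // prodr_ge0 // => j _; exact: f1_ge0.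
- by apply: emeasurable_funM => //; exact: meas_prod.
rewrite !ge0_integralZl_EFin //; last 4 first.
- by move=> w _; rewrite lee_fin prodr_ge0 // => j _; exact: f1_ge0.
- exact: meas_prod.
- by move=> w _; rewrite lee_fin prodr_ge0 // => j _; exact: f0_ge0.
- exact: meas_prod.
Qed.

End Linearity.

Hypothesis mfdd : forall s (C : nat -> set S) (D : nat -> set Act) n,
  (forall j, measurable (C j)) -> (forall j, measurable (D j)) ->
  Pr s (\bigcap_(j in [set j | (j <= n)%N]) (St j @^-1` C j `&` At j @^-1` D j)) =
  fdd P pi C D n 0 s.

Lemma expect_prod_indic (C : nat -> set S) m x : (forall j, measurable (C j)) ->
  expect_prod (fun j => \1_(C j)) m x = kchain (fun j => \1_(C j)) m 0 x.
Proof.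
move=> mC; rewrite -fdd_kchain // -mfdd //.
set E := \bigcap_(j in _) _.
have mE : measurable E.
  apply: bigcap_measurableType => j _; rewrite preimage_setT setIT.
  by rewrite -[_ @^-1` _]setTI; exact: mSt.
rewrite /expect_prod -(setIT E) -integral_indic //; apply: eq_integral => w _.
congr (_%:E); have [Ew|nEw] := pselect (E w).
  rewrite indic_mem // big1 // => j _; rewrite indic_mem //.
  by have [] := Ew j (leq_ord j : (j <= m)%N).
rewrite indic_nmem //.
have [j [jm nC]] : exists j, (j <= m)%N /\ ~ C j (St j w).
  apply: contrapT => H; apply: nEw => j /= jm; split => //.
  by apply: contrapT => nC; apply: H; exists j.
by rewrite (bigD1 (Ordinal (jm : (j < m.+1)%N))) //= indic_nmem // mul0r.
Qed.

(* Induction on the index [p] from which on all factors are indicators: the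
   factor at [p] is split by linearity into two indicators. *)
Lemma expect_prod_kchain_from p f m x : (forall j, nncomb2 (f j)) ->
  (forall j, (p <= j)%N -> exists C, measurable C /\ f j = \1_C) ->
  expect_prod f m x = kchain f m 0 x.
Proof.
elim: p f => [|p IH] f fc fi.
  have [C CP] := choice (fun j => fi j (leq0n j)).
  have -> : f = fun j => \1_(C j) by apply/funext => j; have [_ ->] := CP j.
  by apply: expect_prod_indic => j; have [] := CP j.
have [c0 [c1 [E0 [E1 [c00 c10 mE0 mE1 fpE]]]]] := fc p.
pose upd E j := if j == p then \1_E else f j.
have upd_comb E : measurable E -> forall j, nncomb2 (upd E j).
  by move=> mE j; rewrite /upd; case: eqP => _; [exact: nncomb2_indic|exact: fc].
have upd_indic E : measurable E ->
    forall j, (p <= j)%N -> exists C, measurable C /\ upd E j = \1_C.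
  move=> mE j pj; rewrite /upd; case: eqVneq => [_|jp]; first by exists E.
  by apply: fi; rewrite ltn_neqAle eq_sym jp.
have f_ge0 j y : 0 <= f j y by exact: nncomb2_ge0.
have mf j : measurable_fun [set: S] (f j) by exact: measurable_nncomb2.
have [pm|mp] := leqP p m.
  have mI0 : measurable_fun [set: S] (\1_E0 : S -> R) by exact: measurable_indic.
  have mI1 : measurable_fun [set: S] (\1_E1 : S -> R) by exact: measurable_indic.
  rewrite (expect_prod_lin c00 c10 f_ge0 _ _ mf mI0 mI1 fpE) //.
  rewrite (kchain_lin c00 c10 f_ge0 _ _ mf mI0 mI1 fpE) //.
  by rewrite !IH //;
    [exact: upd_comb|exact: upd_indic|exact: upd_comb|exact: upd_indic].
rewrite (eq_expect_prod (f' := upd E0)) ?(eq_kchain (f' := upd E0)).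
- exact: IH (upd_comb _ mE0) (upd_indic _ mE0).
- by move=> j /andP[_ jm]; rewrite /upd ifN // neq_ltn (leq_ltn_trans jm mp).
- by move=> j jm; rewrite /upd ifN // neq_ltn (leq_ltn_trans jm mp).
Qed.

Lemma expect_prod_kchain f m x : (forall j, nncomb2 (f j)) ->
  expect_prod f m x = kchain f m 0 x.
Proof.
move=> fc; pose f' j := if (j <= m)%N then f j else \1_setT.
rewrite (eq_expect_prod (f' := f')) ?(eq_kchain (f' := f')).
- apply: (@expect_prod_kchain_from m.+1) => j.
    by rewrite /f'; case: ifP => _; [exact: fc|exact: nncomb2_indic].
  by move=> mj; rewrite /f' leqNgt mj; exists setT.
- by move=> j /andP[_ jm]; rewrite /f' jm.
- by move=> j jm; rewrite /f' jm.
Qed.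

(** * One-step expectations *)

Definition bnnfun (phi : S -> R) := [/\ forall y, 0 <= phi y,
  measurable_fun [set: S] phi & exists M, forall y, phi y <= M].

Lemma bnnfun_cst c : 0 <= c -> bnnfun (fun _ => c).
Proof. by move=> c0; split => //; exists c. Qed.

Lemma bnnfun_nncomb2 phi : nncomb2 phi -> bnnfun phi.
Proof.
move=> phic; split; [exact: nncomb2_ge0|exact: measurable_nncomb2|].
exact: nncomb2_ub.
Qed.

Lemma bnnfunD phi psi : bnnfun phi -> bnnfun psi -> bnnfun (fun y => phi y + psi y).
Proof.
move=> [phi0 mphi [M phiM]] [psi0 mpsi [N psiN]]; split.
- by move=> y; exact: addr_ge0.
- exact: measurable_funD.
- by exists (M + N) => y; exact: lerD.
Qed.

Lemma bnnfunM phi psi : bnnfun phi -> bnnfun psi -> bnnfun (fun y => phi y * psi y).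
Proof.
move=> [phi0 mphi [M phiM]] [psi0 mpsi [N psiN]]; split.
- by move=> y; exact: mulr_ge0.
- exact: measurable_funM.
- by exists (M * N) => y; exact: ler_pM.
Qed.

Lemma bnnfunZ c phi : 0 <= c -> bnnfun phi -> bnnfun (fun y => c * phi y).
Proof. by move=> c0; apply: bnnfunM; exact: bnnfun_cst. Qed.

Lemma bnnfun_sum (F : nat -> S -> R) n : (forall t, bnnfun (F t)) ->
  bnnfun (fun y => \sum_(t < n) F t y).
Proof.
move=> FP; elim: n => [|n IH].
  by under eq_fun do rewrite big_ord0; exact: bnnfun_cst.
by under eq_fun do rewrite big_ord_recr; exact: bnnfunD.
Qed.

Definition qexp (phi : S -> R) x := fine (\int[Q x]_y (phi y)%:E)%E.

Lemma mkcomp_integral_le (phi : S -> R) M x :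
  (forall y, 0 <= phi y) -> measurable_fun [set: S] phi -> (forall y, phi y <= M) ->
  (\int[Q x]_y (phi y)%:E <= M%:E)%E.
Proof.
move=> phi0 mphi phiM; apply: (@le_trans _ _ (\int[Q x]_y (cst M%:E) y)%E).
  apply: ge0_le_integral => //.
  - by move=> y _; rewrite lee_fin.
  - exact/measurable_EFinP.
  - by move=> y _; rewrite lee_fin.
by rewrite integral_cst // mkcomp_setT mule1.
Qed.

Lemma qexpE phi x : bnnfun phi -> (\int[Q x]_y (phi y)%:E)%E = (qexp phi x)%:E.
Proof.
move=> [phi0 mphi [M phiM]]; apply: (@bounded_fineK _ _ M).
  by apply: integral_ge0 => y _; rewrite lee_fin.
exact: mkcomp_integral_le.
Qed.

Lemma qexp_ge0 phi x : bnnfun phi -> 0 <= qexp phi x.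
Proof.
move=> phiP; rewrite -lee_fin -qexpE //; apply: integral_ge0 => y _.
by have [phi0 _ _] := phiP; rewrite lee_fin.
Qed.

Lemma qexp_cst c x : qexp (fun _ => c) x = c.
Proof. by rewrite /qexp integral_cst // mkcomp_setT mule1. Qed.

Lemma qexpD phi psi x : bnnfun phi -> bnnfun psi ->
  qexp (fun y => phi y + psi y) x = qexp phi x + qexp psi x.
Proof.
move=> phiP psiP; apply: EFin_inj; rewrite EFinD -!qexpE //; last exact: bnnfunD.
under eq_integral do rewrite EFinD.
have [[phi0 mphi _] [psi0 mpsi _]] := (phiP, psiP).
rewrite ge0_integralD //.
- by move=> y _; rewrite lee_fin.
- exact/measurable_EFinP.
- by move=> y _; rewrite lee_fin.
- exact/measurable_EFinP.
Qed.

Lemma qexpZ c phi x : 0 <= c -> bnnfun phi ->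
  qexp (fun y => c * phi y) x = c * qexp phi x.
Proof.
move=> c0 phiP; apply: EFin_inj; rewrite EFinM -!qexpE //; last exact: bnnfunZ.
under eq_integral do rewrite EFinM.
have [phi0 mphi _] := phiP.
rewrite ge0_integralZl_EFin //; first by move=> y _; rewrite lee_fin.
exact/measurable_EFinP.
Qed.

Lemma ler_qexp phi psi x : bnnfun phi -> bnnfun psi -> (forall y, phi y <= psi y) ->
  qexp phi x <= qexp psi x.
Proof.
move=> phiP psiP le_phi_psi; rewrite -lee_fin -!qexpE //.
have [[phi0 mphi _] [psi0 mpsi _]] := (phiP, psiP).
apply: ge0_le_integral => //; first by move=> y _; rewrite lee_fin.
- exact/measurable_EFinP.
- exact/measurable_EFinP.
- by move=> y _; rewrite lee_fin.
Qed.

Lemma qexp_sum (F : nat -> S -> R) n x : (forall t, bnnfun (F t)) ->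
  qexp (fun y => \sum_(t < n) F t y) x = \sum_(t < n) qexp (F t) x.
Proof.
move=> FP; elim: n => [|n IH].
  by under eq_fun do rewrite big_ord0; rewrite qexp_cst big_ord0.
under eq_fun do rewrite big_ord_recr.
by rewrite qexpD ?IH ?big_ord_recr //; exact: bnnfun_sum.
Qed.

Definition expect_prodr f m x := fine (expect_prod f m x).

Section NonnegCombFamily.
Variable f : nat -> S -> R.
Hypothesis fc : forall j, nncomb2 (f j).

Lemma expect_prod_bounded m : exists M, forall x,
  (0 <= expect_prod f m x)%E /\ (expect_prod f m x <= M%:E)%E.
Proof.
have f0 j y : 0 <= f j y by exact: nncomb2_ge0.
have [b fb] := choice (fun j => nncomb2_ub (fc j)).
exists (\prod_(j < m.+1) b j) => x; split.
  by apply: integral_ge0 => w _; rewrite lee_fin prodr_ge0.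
apply: (@le_trans _ _ (\int[Pr x]_w (cst (\prod_(j < m.+1) b j)%:E) w)%E).
  apply: ge0_le_integral => //.
  - by move=> w _; rewrite lee_fin prodr_ge0.
  - apply/measurable_EFinP; apply: measurable_prod_St => j.
    exact: measurable_nncomb2.
  - by move=> w _; rewrite lee_fin; apply: ler_prod => j _; rewrite f0 fb.
by rewrite integral_cst // Pr_setT mule1.
Qed.

Lemma expect_prodrE m x : expect_prod f m x = (expect_prodr f m x)%:E.
Proof.
have [M fM] := expect_prod_bounded m; have [f0 fle] := fM x.
exact: bounded_fineK fle.
Qed.

Lemma bnnfun_expect_prodr m : bnnfun (expect_prodr f m).
Proof.
have [M fM] := expect_prod_bounded m; split.
- by move=> x; have [f0 _] := fM x; exact: fine_ge0.
- rewrite (_ : expect_prodr f m = fine \o kchain f m 0).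
    apply: measurableT_comp; first exact: fine_measurable.
    by apply: measurable_kchain => j; [exact: nncomb2_ge0|exact: measurable_nncomb2].
  by apply/funext => x; rewrite /expect_prodr /= expect_prod_kchain.
- by exists M => x; rewrite -lee_fin -expect_prodrE; have [] := fM x.
Qed.

Lemma expect_prodr0 x : expect_prodr f 0 x = f 0 x.
Proof. by rewrite /expect_prodr expect_prod_kchain. Qed.

End NonnegCombFamily.

Lemma expect_prodrS f m x : (forall j, nncomb2 (f j)) ->
  expect_prodr f m.+1 x = f 0 x * qexp (expect_prodr (fun j => f j.+1) m) x.
Proof.
move=> fc; rewrite /expect_prodr expect_prod_kchain //=.
under eq_integral => y _ do
  rewrite kchain_shift -expect_prod_kchain // expect_prodrE //.
by rewrite qexpE -?EFinM //; exact: bnnfun_expect_prodr.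
Qed.

Lemma qexp_absorbing (I : set S) x : measurable I ->
  Pr x (St 1 @^-1` I) = 1%E -> qexp \1_I x = 1.
Proof.
move=> mI PrI; pose f j : S -> R := if j == 1%N then \1_I else \1_setT.
have fc j : nncomb2 (f j) by rewrite /f; case: ifP => _; exact: nncomb2_indic.
have mStI : measurable (St 1 @^-1` I) by rewrite -[_ @^-1` _]setTI; exact: mSt.
have := expect_prod_kchain 1 x fc.
rewrite /expect_prod (eq_integral (fun w => (\1_(St 1 @^-1` I) w)%:E)) => [|w _].
  have PrI' : ((Pr x : {measure set O -> \bar R}) (St 1 @^-1` I) = 1)%E := PrI.
  by rewrite integral_indic // setIT PrI' /= /f /= indic_mem // mul1e /qexp => <-.
by rewrite !big_ord_recr big_ord0 /= /f /= mul1r indic_mem // mul1r.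
Qed.

Lemma ler_qexp_absorbing (I : set S) phi psi x : measurable I -> qexp \1_I x = 1 ->
  bnnfun phi -> bnnfun psi -> (forall y, I y -> phi y <= psi y) ->
  qexp phi x <= qexp psi x.
Proof.
move=> mI QI phiP psiP le_phi_psi.
have IP := bnnfun_nncomb2 (nncomb2_indic mI).
have ICP := bnnfun_nncomb2 (nncomb2_indic (measurableC mI)).
have indicU : (fun y => \1_I y + \1_(~` I) y) = fun _ => 1 :> R.
  apply/funext => y; have [Iy|nIy] := pselect (I y).
    by rewrite indic_mem // indic_nmem ?addr0.
  by rewrite indic_nmem // indic_mem ?add0r.
have QIC : qexp \1_(~` I) x = 0.
  by have := qexpD x IP ICP; rewrite indicU qexp_cst QI; lra.
have [phi0 _ [M phiM]] := phiP; have M0 : 0 <= M := le_trans (phi0 x) (phiM x).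
have -> : qexp phi x =
    qexp (fun y => phi y * \1_I y) x + qexp (fun y => phi y * \1_(~` I) y) x.
  rewrite -qexpD; [|exact: bnnfunM|exact: bnnfunM].
  by congr qexp; apply/funext => y; rewrite -mulrDr (congr1 (@^~ y) indicU) mulr1.
have outside : qexp (fun y => phi y * \1_(~` I) y) x <= 0.
  apply: (@le_trans _ _ (qexp (fun y => M * \1_(~` I) y) x)).
    apply: ler_qexp; [exact: bnnfunM|exact: bnnfunZ|].
    by move=> y; apply: ler_wpM2r.
  by rewrite qexpZ // QIC mulr0.
have inside : qexp (fun y => phi y * \1_I y) x <= qexp psi x.
  apply: ler_qexp => [||y]; [exact: bnnfunM|exact: psiP|].
  have [Iy|nIy] := pselect (I y); first by rewrite indic_mem ?mulr1 // le_phi_psi.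
  by rewrite indic_nmem // mulr0; case: psiP.
lra.
Qed.

Section Discount.
Variable gamma : R.
Hypotheses (gamma_gt0 : 0 < gamma) (gamma_le1 : gamma <= 1).

Let ln_gamma_le0 : ln gamma <= 0.
Proof. by rewrite ln_le0. Qed.

Lemma bnnfun_powR h : bnnfun h -> bnnfun (fun y => gamma `^ h y).
Proof.
move=> [h0 mh _]; split.
- by move=> y; exact: powR_ge0.
- rewrite (_ : (fun y => _) = fun y => expR (h y * ln gamma)).
    by apply: measurableT_comp => //; exact: measurable_funM.
  by apply/funext => y; rewrite /powR gt_eqF.
- by exists 1 => y; rewrite /powR gt_eqF // expR_le1 mulr_ge0_le0.
Qed.

(* Jensen's inequality for the convex map [r |-> gamma `^ r], through its
   tangent at [qexp h x]. *)
Lemma powR_qexp_le h x : bnnfun h ->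
  gamma `^ qexp h x <= qexp (fun y => gamma `^ h y) x.
Proof.
move=> hP; set u := qexp h x; set v := gamma `^ u; set k := - (v * ln gamma).
have v0 : 0 <= v by exact: powR_ge0.
have k0 : 0 <= k by rewrite oppr_ge0 mulr_ge0_le0.
have u0 : 0 <= u by exact: qexp_ge0.
have tangent y : v + k * u <= gamma `^ h y + k * h y.
  rewrite /k /v /powR gt_eqF //.
  have -> : h y * ln gamma = u * ln gamma + (h y - u) * ln gamma by ring.
  rewrite expRD; have := expR_ge1Dx ((h y - u) * ln gamma).
  move/(ler_wpM2l (expR_ge0 (u * ln gamma))); set E := expR (u * ln gamma); nra.
have := ler_qexp x (bnnfun_cst (addr_ge0 v0 (mulr_ge0 k0 u0)))
  (bnnfunD (bnnfun_powR hP) (bnnfunZ k0 hP)) tangent.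
by rewrite qexp_cst qexpD ?qexpZ -/u //; [lra|exact: bnnfun_powR|exact: bnnfunZ].
Qed.

End Discount.

(** * Discounted values *)

Definition term_family (u phi : S -> R) (t j : nat) : S -> R :=
  if (j < t)%N then u else phi.

Definition disc_term u phi t := expect_prodr (term_family u phi t) t.

Definition disc_value u phi n x := \sum_(t < n) disc_term u phi t x.

Definition path_value (u phi : S -> R) (s : nat -> S) n :=
  \sum_(t < n) (\prod_(j < t) u (s j)) * phi (s t).

Lemma prod_term_family u phi (s : nat -> S) t :
  \prod_(j < t.+1) term_family u phi t j (s j) = (\prod_(j < t) u (s j)) * phi (s t).
Proof.
rewrite big_ord_recr /= /term_family ltnn; congr (_ * _).
by apply: eq_bigr => j _; rewrite ltn_ord.
Qed.

Lemma path_value_ge0 u phi s n : (forall y, 0 <= u y) -> (forall y, 0 <= phi y) ->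
  0 <= path_value u phi s n.
Proof. by move=> u0 phi0; rewrite sumr_ge0 // => t _; rewrite mulr_ge0 ?prodr_ge0. Qed.

Lemma path_value_nondecreasing u phi s :
  (forall y, 0 <= u y) -> (forall y, 0 <= phi y) ->
  {homo path_value u phi s : n m / (n <= m)%N >-> n <= m}.
Proof.
move=> u0 phi0 n m nm; rewrite /path_value -(subnKC nm) big_split_ord /= lerDl.
by rewrite sumr_ge0 // => t _; rewrite mulr_ge0 ?prodr_ge0.
Qed.

Lemma path_value_cvg u phi s K : (forall y, 0 <= u y) -> (forall y, 0 <= phi y) ->
  (forall n, path_value u phi s n <= K) -> cvgn (path_value u phi s).
Proof.
move=> u0 phi0 le_K; apply: nondecreasing_is_cvgn.
  exact: path_value_nondecreasing.
by exists K => _ [n _ <-]; exact: le_K.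
Qed.

Section DiscountedValue.
Variables u phi : S -> R.
Hypotheses (uc : nncomb2 u) (phic : nncomb2 phi).

Let term_family_nncomb2 t j : nncomb2 (term_family u phi t j).
Proof. by rewrite /term_family; case: ifP. Qed.

Lemma bnnfun_disc_value n : bnnfun (disc_value u phi n).
Proof. by apply: bnnfun_sum => t; exact: bnnfun_expect_prodr. Qed.

Lemma disc_valueS n x :
  disc_value u phi n.+1 x = phi x + u x * qexp (disc_value u phi n) x.
Proof.
rewrite [in qexp _ _]/disc_value qexp_sum => [|t]; last exact: bnnfun_expect_prodr.
rewrite /disc_value big_ord_recl /disc_term expect_prodr0 //; congr (_ + _).
by rewrite mulr_sumr; apply: eq_bigr => t _; rewrite expect_prodrS.
Qed.

Lemma measurable_path_term t :
  measurable_fun [set: O] (fun w => (\prod_(j < t) u (St j w)) * phi (St t w)).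
Proof.
under eq_fun => w do rewrite -(prod_term_family u phi (St^~ w)).
by apply: measurable_prod_St => j; exact: measurable_nncomb2.
Qed.

Lemma measurable_path_value n :
  measurable_fun [set: O] (fun w => path_value u phi (St^~ w) n).
Proof. by apply: measurable_sum => t; exact: measurable_path_term. Qed.

Lemma disc_valueE n x :
  (disc_value u phi n x)%:E = (\int[Pr x]_w (path_value u phi (St^~ w) n)%:E)%E.
Proof.
have term_ge0 t w : 0 <= (\prod_(j < t) u (St j w)) * phi (St t w).
  by rewrite -(prod_term_family u phi (St^~ w)) prodr_ge0 // => j _; exact: nncomb2_ge0.
rewrite /disc_value -sumEFin; under eq_integral do rewrite /path_value -sumEFin.
rewrite ge0_integral_sum // => [|t|t w _]; last 2 first.
- by apply/measurable_EFinP; exact: measurable_path_term.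
- by rewrite lee_fin.
apply: eq_bigr => t _; rewrite /disc_term -expect_prodrE //.
by apply: eq_integral => w _; rewrite (prod_term_family u phi (St^~ w)).
Qed.

Section BoundedPaths.
Variables (x : S) (K : R).
Hypothesis path_value_le : forall w n, path_value u phi (St^~ w) n <= K.

Let u_ge0 := nncomb2_ge0 uc.
Let phi_ge0 := nncomb2_ge0 phic.

Let path_value_cvgn w : cvgn (path_value u phi (St^~ w)).
Proof. exact: path_value_cvg (path_value_le w). Qed.

Lemma disc_value_cvgn : cvgn (disc_value u phi ^~ x).
Proof.
have mpv n : measurable_fun [set: O] (fun w => (path_value u phi (St^~ w) n)%:E).
  exact/measurable_EFinP/measurable_path_value.
apply: nondecreasing_is_cvgn => [n m nm|].
  rewrite -lee_fin !disc_valueE; apply: ge0_le_integral => //.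
  - by move=> w _; rewrite lee_fin path_value_ge0.
  - by move=> w _; rewrite lee_fin path_value_nondecreasing.
exists K => _ [n _ <-]; rewrite -lee_fin disc_valueE.
apply: (@le_trans _ _ (\int[Pr x]_w (cst K%:E) w)%E).
  apply: ge0_le_integral => //.
  - by move=> w _; rewrite lee_fin path_value_ge0.
  - by move=> w _; rewrite lee_fin.
by rewrite integral_cst // Pr_setT mule1.
Qed.

Lemma integrable_lim_path_value :
  (Pr x).-integrable setT (EFin \o (fun w => limn (path_value u phi (St^~ w)))).
Proof.
apply: measurable_bounded_integrable; [by []|by rewrite Pr_setT ltry| |].
  apply: (measurable_fun_cvg (h := fun n w => path_value u phi (St^~ w) n)).
    exact: measurable_path_value.
  by move=> w _; exact: path_value_cvgn.
exists K; split; first exact: num_real.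
move=> M KM w _ /=; rewrite ger0_norm; last first.
  by apply: limr_ge => //; near=> n; exact: path_value_ge0.
apply: le_trans (ltW KM).
by apply: limr_le => //; near=> n; exact: path_value_le.
Unshelve. all: by end_near.
Qed.

Lemma integral_lim_path_value :
  (\int[Pr x]_w (limn (path_value u phi (St^~ w)))%:E)%E =
  (limn (disc_value u phi ^~ x))%:E.
Proof.
rewrite (eq_integral (fun w => limn (EFin \o path_value u phi (St^~ w)))).
  rewrite monotone_convergence //.
  - rewrite -EFin_lim; last exact: disc_value_cvgn.
    by congr (limn _); apply/funext => n /=; rewrite disc_valueE.
  - by move=> n; exact/measurable_EFinP/measurable_path_value.
  - by move=> n w _; rewrite lee_fin path_value_ge0.
  - by move=> w _ n m nm; rewrite lee_fin path_value_nondecreasing.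
by move=> w _; rewrite EFin_lim.
Qed.

End BoundedPaths.

End DiscountedValue.

Section Bound.
Variables (A B : set S) (gamma rB rAB : R).
Hypotheses (mA : measurable A) (mB : measurable B).
Hypotheses (gamma_gt0 : 0 < gamma) (gamma_lt1 : gamma < 1).
Hypotheses (rB_gt0 : 0 < rB) (rAB_gt0 : 0 < rAB).

Definition discount y := gamma * \1_(A `|` B) y + \1_(~` (A `|` B)) y.
Definition reward y := rB * \1_B y.
Definition cost y := rAB * \1_(A `\` B) y.

Let nncomb2_discount : nncomb2 discount.
Proof.
exists gamma, 1, (A `|` B), (~` (A `|` B)); split => //.
- exact: ltW.
- exact: measurableU.
- exact/measurableC/measurableU.
- by move=> y; rewrite mul1r.
Qed.

Let nncomb2_reward : nncomb2 reward.
Proof. exact: nncomb2_scale_indic (ltW rB_gt0) mB. Qed.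

Let nncomb2_cost : nncomb2 cost.
Proof. exact: nncomb2_scale_indic (ltW rAB_gt0) (measurableD mA mB). Qed.

Let nncomb2_notB : nncomb2 (\1_(~` B) : S -> R).
Proof. exact/nncomb2_indic/measurableC. Qed.

Let nncomb2_AnotB : nncomb2 (\1_(A `\` B) : S -> R).
Proof. exact/nncomb2_indic/measurableD. Qed.

Let gamma_ge0 : 0 <= gamma. Proof. exact: ltW. Qed.
Let one_minus_gamma_gt0 : 0 < 1 - gamma. Proof. by rewrite subr_gt0. Qed.

Section Path.
Variable s : nat -> S.

Lemma prod_discount t : \prod_(j < t) discount (s j) = gamma ^+ Ncount (A `|` B) s t.
Proof.
rewrite /Ncount -prodrXr; apply: eq_bigr => j _; rewrite /discount.
have [sU|nsU] := pselect ((A `|` B) (s j)).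
  by rewrite indic_mem // indic_nmem ?mem_set //= ?mulr1 ?addr0 //; apply.
by rewrite indic_nmem // indic_mem ?memNset //= ?mulr0 ?add0r.
Qed.

Lemma sum_discount_visits n :
  \sum_(t < n) gamma ^+ Ncount (A `|` B) s t * \1_(A `|` B) (s t) =
  (1 - gamma ^+ Ncount (A `|` B) s n) / (1 - gamma).
Proof.
elim: n => [|n IH]; first by rewrite big_ord0 /Ncount big_ord0 expr0 subrr mul0r.
rewrite big_ord_recr /= IH /Ncount big_ord_recr /= exprD -/(Ncount _ _ _).
have [sU|nsU] := pselect ((A `|` B) (s n)).
  rewrite indic_mem // mem_set // expr1 mulr1; field.
  by rewrite subr_eq0 gt_eqF.
by rewrite indic_nmem // memNset // expr0 !mulr1 mulr0 addr0.
Qed.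

Lemma path_value_discount_le phi r n : 0 <= r ->
  (forall y, phi y <= r * \1_(A `|` B) y) ->
  path_value discount phi s n <= r / (1 - gamma).
Proof.
move=> r0 phi_le; apply: (@le_trans _ _
  (r * \sum_(t < n) gamma ^+ Ncount (A `|` B) s t * \1_(A `|` B) (s t))).
  rewrite /path_value mulr_sumr; apply: ler_sum => t _; rewrite prod_discount.
  by rewrite mulrCA ler_wpM2l ?exprn_ge0.
rewrite sum_discount_visits mulrA; apply: ler_wpM2r; first by rewrite invr_ge0 ltW.
by rewrite ler_piMr // lerBlDr lerDl exprn_ge0.
Qed.

Lemma path_value_reward_le n : path_value discount reward s n <= rB / (1 - gamma).
Proof.
apply: path_value_discount_le => [|y]; first exact: ltW.
rewrite /reward ler_wpM2l ?(ltW rB_gt0) //.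
have [yB|nyB] := pselect (B y); last by rewrite indic_nmem.
by rewrite !indic_mem //; right.
Qed.

Lemma path_value_cost_le n : path_value discount cost s n <= rAB / (1 - gamma).
Proof.
apply: path_value_discount_le => [|y]; first exact: ltW.
rewrite /cost ler_wpM2l ?(ltW rAB_gt0) //.
have [[yA nyB]|nyAB] := pselect ((A `\` B) y); last by rewrite indic_nmem.
by rewrite !indic_mem //; left.
Qed.

Lemma disc_return_path_value (a : nat -> Act) : disc_return A B rB rAB gamma s a =
  limn (path_value discount reward s) - limn (path_value discount cost s).
Proof.
have d0 := nncomb2_ge0 nncomb2_discount.
rewrite -limB; last 2 first.
- exact: path_value_cvg d0 (nncomb2_ge0 nncomb2_reward) path_value_reward_le.
- exact: path_value_cvg d0 (nncomb2_ge0 nncomb2_cost) path_value_cost_le.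
rewrite /disc_return (_ : (fun n => _) =
  path_value discount reward s - path_value discount cost s) //.
apply/funext => n; rewrite [RHS]/GRing.add /= /path_value -sumrB.
apply: eq_bigr => t _.
by rewrite prod_discount -mulrBr.
Qed.

Lemma first_visit_term t :
  (\prod_(j < t) \1_(~` B) (s j)) * \1_(A `\` B) (s t) =
  \1_[set i | (forall j, (j <= i)%N -> ~ B (s j)) /\ A (s i)] t :> R.
Proof.
have [[noB sA]|nvisit] := pselect ((forall j, (j <= t)%N -> ~ B (s j)) /\ A (s t)).
  rewrite [in RHS]indic_mem // [in LHS]indic_mem; last by split => //; exact: noB.
  by rewrite mulr1 big1 // => j _; rewrite indic_mem //; apply: noB; exact: ltnW.
rewrite [in RHS]indic_nmem //.
have [[sA nsB]|nAB] := pselect ((A `\` B) (s t)); last first.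
  by rewrite [in LHS]indic_nmem // mulr0.
have [j [jt sB]] : exists j, (j <= t)%N /\ B (s j).
  apply: contrapT => nex; apply: nvisit; split => // j jt sB.
  by apply: nex; exists j.
have jt' : (j < t)%N by rewrite ltn_neqAle jt andbT; apply: contraPneq nsB => <-.
by rewrite (bigD1 (Ordinal jt')) //= indic_nmem ?mul0r //; apply.
Qed.

Lemma path_value_steps_le n :
  ((path_value \1_(~` B) \1_(A `\` B) s n)%:E <= stepAB A B s)%E.
Proof.
rewrite /path_value /stepAB -sumEFin.
under eq_bigr do rewrite first_visit_term.
rewrite -(big_mkord xpredT (fun i => (\1_[set i | _] i)%:E)).
by apply: nneseries_lim_ge => i _ _; rewrite lee_fin.
Qed.

End Path.

Lemma disc_value_steps_le n x :
  ((disc_value \1_(~` B) \1_(A `\` B) n x)%:E <=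
   \int[Pr x]_w stepAB A B (St^~ w))%E.
Proof.
rewrite disc_valueE //; apply: ge0_le_integral => //.
- by move=> w _; rewrite lee_fin path_value_ge0.
- exact/measurable_EFinP/measurable_path_value.
- rewrite /stepAB; under eq_fun => w do
    under eq_eseriesr => i _ do rewrite -(first_visit_term (St^~ w)).
  apply: ge0_emeasurable_sum => [k w _ _|k _].
    by rewrite lee_fin mulr_ge0 ?prodr_ge0.
  exact/measurable_EFinP/measurable_path_term.
- by move=> w _; exact: path_value_steps_le.
Qed.

Variables (I : set S) (H : R).
Hypotheses (mI : measurable I) (I_absorbing : forall x, I x -> qexp \1_I x = 1).
Hypothesis steps_le : forall n x, I x -> disc_value \1_(~` B) \1_(A `\` B) n x <= H.
Hypothesis reward_large : gamma * (rAB / (1 - gamma)) * (1 - gamma `^ H) <= rB.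

Let c := rAB / (1 - gamma).

Let c_ge0 : 0 <= c. Proof. by rewrite divr_ge0 // ltW. Qed.

Lemma bellman_step y (p q u z : R) :
  q + c * z <= p + c -> gamma `^ u <= z -> gamma `^ H <= z ->
  cost y + discount y * q + c * gamma `^ (\1_(A `\` B) y + \1_(~` B) y * u) <=
  reward y + discount y * p + c.
Proof.
move=> hq hz hzH; rewrite /cost /reward /discount.
have gq : gamma * (q + c * z) <= gamma * (p + c) by rewrite ler_wpM2l.
have [yB|nyB] := pselect (B y).
  have yU : (A `|` B) y by right.
  have nyAB : ~ (A `\` B) y by case.
  rewrite (indic_mem yU) (indic_nmem (fun h : (~` (A `|` B)) y => h yU)).
  rewrite (indic_mem yB) (indic_nmem nyAB) (indic_nmem (fun h : (~` B) y => h yB)).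
  rewrite !(mulr0, mul0r, addr0, add0r, mulr1) powRr0 mulr1.
  have := ler_wpM2l gamma_ge0 (ler_wpM2l c_ge0 hzH).
  by move: reward_large; rewrite -/c; nra.
have [yA|nyA] := pselect (A y).
  have yU : (A `|` B) y by left.
  rewrite (indic_mem yU) (indic_nmem (fun h : (~` (A `|` B)) y => h yU)).
  rewrite (indic_nmem nyB) (@indic_mem _ _ (A `\` B)) // (@indic_mem _ _ (~` B)) //.
  rewrite !(mulr0, addr0, mul1r, mulr1) add0r powRD ?powRr1 //; last first.
    by rewrite (gt_eqF gamma_gt0) implybT.
  have := ler_wpM2l gamma_ge0 (ler_wpM2l c_ge0 hz).
  have : c * (1 - gamma) = rAB by rewrite /c divfK // gt_eqF.
  nra.
have nyU : ~ (A `|` B) y by case.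
rewrite (indic_nmem nyU) (@indic_mem _ _ (~` (A `|` B))) // (indic_nmem nyB).
rewrite (@indic_nmem _ _ (A `\` B)) ?(@indic_mem _ _ (~` B)) //; last by case.
rewrite !(mulr0, addr0, add0r, mul1r).
by have := ler_wpM2l c_ge0 hz; lra.
Qed.

Lemma disc_value_invariant n x : I x ->
  disc_value discount cost n x + c * gamma `^ disc_value \1_(~` B) \1_(A `\` B) n x <=
  disc_value discount reward n x + c.
Proof.
elim: n x => [|n IH] x Ix.
  by rewrite /disc_value !big_ord0 powRr0 mulr1.
have H0 : 0 <= H by have := steps_le 0 Ix; rewrite /disc_value big_ord0.
have Vc := bnnfun_disc_value nncomb2_discount nncomb2_cost n.
have Vr := bnnfun_disc_value nncomb2_discount nncomb2_reward n.
have Vs := bnnfun_disc_value nncomb2_notB nncomb2_AnotB n.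
have gamma_le1 : gamma <= 1 by exact: ltW.
have Ppow := bnnfun_powR gamma_gt0 gamma_le1 Vs.
rewrite !disc_valueS //.
apply: (@bellman_step _ _ _ _
  (qexp (fun y => gamma `^ disc_value \1_(~` B) \1_(A `\` B) n y) x)).
- have := ler_qexp_absorbing mI (I_absorbing Ix) (bnnfunD Vc (bnnfunZ c_ge0 Ppow))
    (bnnfunD Vr (bnnfun_cst c_ge0)) IH.
  by rewrite (qexpD x Vc (bnnfunZ c_ge0 Ppow)) (qexpZ x c_ge0 Ppow)
    (qexpD x Vr (bnnfun_cst c_ge0)) qexp_cst.
- exact: powR_qexp_le.
- apply: le_trans (powR_qexp_le gamma_gt0 gamma_le1 x Vs).
  apply: ger_powR; first by rewrite gamma_gt0.
  have := ler_qexp_absorbing mI (I_absorbing Ix) Vs (bnnfun_cst H0)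
    (fun y Iy => steps_le n Iy).
  by rewrite qexp_cst.
Qed.

Lemma disc_value_gap_ge n x : I x ->
  c * gamma `^ H - c <= disc_value discount reward n x - disc_value discount cost n x.
Proof.
move=> Ix; have := disc_value_invariant n Ix.
have : gamma `^ H <= gamma `^ disc_value \1_(~` B) \1_(A `\` B) n x.
  by apply: ger_powR; [rewrite gamma_gt0 ltW|exact: steps_le].
move/(ler_wpM2l c_ge0); lra.
Qed.

Lemma expect_disc_return_ge x : I x ->
  ((c * gamma `^ H - c)%:E <=
   \int[Pr x]_w (disc_return A B rB rAB gamma (St^~ w) (At^~ w))%:E)%E.
Proof.
move=> Ix.
have reward_le w := path_value_reward_le (St^~ w).
have cost_le w := path_value_cost_le (St^~ w).
have iR := integrable_lim_path_value nncomb2_discount nncomb2_reward x reward_le.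
have iC := integrable_lim_path_value nncomb2_discount nncomb2_cost x cost_le.
rewrite (eq_integral (fun w =>
    (limn (path_value discount reward (St^~ w)))%:E -
    (limn (path_value discount cost (St^~ w)))%:E)%E) => [|w _]; last first.
  by rewrite disc_return_path_value EFinB.
rewrite (integralB_EFin measurableT iR iC).
rewrite (integral_lim_path_value nncomb2_discount nncomb2_reward x reward_le).
rewrite (integral_lim_path_value nncomb2_discount nncomb2_cost x cost_le).
have cvR := disc_value_cvgn nncomb2_discount nncomb2_reward reward_le.
have cvC := disc_value_cvgn nncomb2_discount nncomb2_cost cost_le.
rewrite -EFinB lee_fin -limB //; apply: limr_ge; first exact: is_cvgB.
by near=> n; exact: disc_value_gap_ge.
Unshelve. all: by end_near.
Qed.

End Bound.

End MarkovChain.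

Lemma mul_subr1_le_invr_sub1 (R : realFieldType) (g x : R) : 0 < g <= 1 -> 0 < x ->
  g * (1 - x) <= (x * g)^-1 - 1.
Proof.
move=> /andP[g0 g1] x0; have t0 : 0 < x * g by exact: mulr_gt0.
rewrite -(ler_pM2l t0) [leRHS]mulrBr mulfV ?gt_eqF // mulr1.
have := sqr_ge0 (1 - x * g); have : 0 <= (1 - g) * (x * g).
  by rewrite mulr_ge0 ?subr_ge0 // ltW.
nra.
Qed.

Lemma reward_ratio_large (R : realType) (gamma H rB rAB : R) :
  0 < gamma < 1 -> 0 < rAB ->
  (1 - gamma)^-1 * ((gamma `^ (H + 1))^-1 - 1) <= rB / rAB ->
  gamma * (rAB / (1 - gamma)) * (1 - gamma `^ H) <= rB.
Proof.
move=> /andP[g0 g1] rAB0; rewrite ler_pdivlMr // => ratio.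
have g1' : 0 < 1 - gamma by rewrite subr_gt0.
have gH1 : gamma `^ (H + 1) = gamma `^ H * gamma.
  by rewrite powRD ?(gt_eqF g0) ?implybT // powRr1 // ltW.
rewrite gH1 in ratio.
apply: le_trans ratio; set x := gamma `^ H.
have c0 : 0 <= rAB / (1 - gamma) by rewrite divr_ge0 // ltW.
have key : gamma * (1 - x) <= (x * gamma)^-1 - 1.
  by apply: mul_subr1_le_invr_sub1; rewrite ?g0 ?ltW ?powR_gt0.
have -> : gamma * (rAB / (1 - gamma)) * (1 - x) =
          rAB / (1 - gamma) * (gamma * (1 - x)) by ring.
have -> : (1 - gamma)^-1 * ((x * gamma)^-1 - 1) * rAB =
          rAB / (1 - gamma) * ((x * gamma)^-1 - 1) by ring.
exact: ler_wpM2l.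
Qed.

Theorem lemma6 (R : realType) (dS dA dO : measure_display)
  (S : measurableType dS) (Act : measurableType dA) (O : measurableType dO)
  (P : R.-pker (S * Act) ~> S) (mu : probability S R)
  (pi : R.-pker S ~> Act)
  (Pr : S -> probability O R) (St : nat -> O -> S) (At : nat -> O -> Act)
  (I A B : set S) (gamma Hbar rB rAB : R) :
  is_MDP_process P pi Pr St At ->
  measurable I -> measurable A -> measurable B ->
  (forall s, I s -> Pr s (St 1 @^-1` I) = 1%E) ->
  mu I = 1%E ->
  0 < gamma < 1 ->
  (forall s, I s ->
     (\int[Pr s]_w stepAB A B (fun t => St t w) <= Hbar%:E)%E) ->
  0 < rB -> 0 < rAB ->
  rB / rAB >= (1 - gamma)^-1 * ((gamma `^ (Hbar + 1))^-1 - 1) ->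
  forall s, I s ->
    (\int[Pr s]_w (disc_return A B rB rAB gamma
                      (fun t => St t w) (fun t => At t w))%:E
      >= (- (rAB * (1 - gamma `^ Hbar) / (1 - gamma)))%:E)%E.
Proof.
(* The bound holds for every initial state in [I]. *)
move=> [mSt [_ mfdd]] mI mA mB PrI _ gamma01 steps_bounded rB_gt0 rAB_gt0 ratio s Is.
have [gamma_gt0 gamma_lt1] := andP gamma01.
have I_absorbing x : I x -> qexp P pi \1_I x = 1.
  by move=> Ix; apply: (qexp_absorbing mSt mfdd mI); exact: PrI.
have steps_le n x : I x -> disc_value Pr St \1_(~` B) \1_(A `\` B) n x <= Hbar.
  move=> Ix; rewrite -lee_fin; apply: le_trans (steps_bounded x Ix).
  exact: disc_value_steps_le.
have -> : - (rAB * (1 - gamma `^ Hbar) / (1 - gamma)) =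
          rAB / (1 - gamma) * gamma `^ Hbar - rAB / (1 - gamma) by ring.
exact: (expect_disc_return_ge mSt mfdd mA mB gamma_gt0 gamma_lt1 rB_gt0 rAB_gt0 mI
  I_absorbing steps_le (reward_ratio_large gamma01 rAB_gt0 ratio) Is).
Qed.
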